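(* Consider the network and loss $\mathcal{L}$ from the context with $|J|=1$. If $\overline{\mathbf{P}}$ is a stationary point of $\mathcal{L}$ that is not a local minimum, then there exist a unit vector $\boldsymbol{\ell}\in\mathbb{R}^D$ and a constant $C<0$ such that $\mathcal{L}(\overline{\mathbf{P}}+\delta\boldsymbol{\ell})-\mathcal{L}(\overline{\mathbf{P}})<0$ for all sufficiently small $\delta>0$ and $\mathcal{L}(\overline{\mathbf{P}}+\delta\boldsymbol{\ell})-\mathcal{L}(\overline{\mathbf{P}})\sim C\delta^2$ as $\delta\to0^+$.
   Context: Fix an integer $d>1$, finite index sets $I$ (hidden neurons), $J$ (output neurons), $K$ (samples), reals $\alpha^+\neq\alpha^-$, and $\rho(z)=\alpha^+z$ for $z\ge0$, $\rho(z)=\alpha^-z$ for $z<0$ (componentwise). Parameters $\mathbf{P}=(W,H)\in\mathbb{R}^D$, $D=|J||I|+|I|d$, $W\in\mathbb{R}^{|I|\times d}$ with rows $\mathbf{w}_i$, $H=(h_{ji})\in\mathbb{R}^{|J|\times|I|}$; output $\hat{\mathbf{y}}(\mathbf{P};\mathbf{x})=H\rho(W\mathbf{x})$; training data $\mathbf{x}_k\in\mathbb{R}^d$, $\mathbf{y}_k\in\mathbb{R}^{|J|}$, $k\in K$; loss $\mathcal{L}(\mathbf{P})=\frac12\sum_{k\in K}\|\hat{\mathbf{y}}(\mathbf{P};\mathbf{x}_k)-\mathbf{y}_k\|^2$. A point $\overline{\mathbf{P}}$ is a stationary point if $\lim_{\alpha\to0^+}\frac{\mathcal{L}(\overline{\mathbf{P}}+\alpha\mathbf{d})-\mathcal{L}(\overline{\mathbf{P}})}{\alpha}\ge0$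 for all $\mathbf{d}\in\mathbb{R}^D$. *)

From HB Require Import structures.
From mathcomp Require Import all_boot all_order all_algebra.
From mathcomp Require Import all_classical all_reals all_analysis.
Set Implicit Arguments. Unset Strict Implicit. Unset Printing Implicit Defensive.
Import Order.TTheory GRing.Theory Num.Theory numFieldNormedType.Exports.
Local Open Scope classical_set_scope.
Local Open Scope ring_scope.

Section Net.
Variables (R : realType) (nI d : nat).

(* Parameters P = (W, H) with |J| = 1: W : |I| x d, H : 1 x |I|.
   This is R^D with D = |I| + |I| d. *)
Definition param := ('M[R]_(nI, d) * 'rV[R]_nI)%type.

Definition padd (P Q : param) : param := (P.1 + Q.1, P.2 + Q.2).
Definition pscale (a : R) (P : param) : param := (a *: P.1, a *: P.2).
Definition psub (P Q : param) : param := (P.1 - Q.1, P.2 - Q.2).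

Definition pnorm2 (P : param) : R :=
  \sum_(i < nI) \sum_(j < d) (P.1 i j) ^+ 2 + \sum_(i < nI) (P.2 0 i) ^+ 2.

Definition rho (ap am : R) (z : R) : R := if 0 <= z then ap * z else am * z.

Definition yhat (ap am : R) (P : param) (x : 'cV[R]_d) : R :=
  (P.2 *m map_mx (rho ap am) (P.1 *m x)) 0 0.

Definition loss (ap am : R) (nK : nat) (xs : 'I_nK -> 'cV[R]_d)
  (ys : 'I_nK -> R) (P : param) : R :=
  2^-1 * \sum_(k < nK) (yhat ap am P (xs k) - ys k) ^+ 2.

Definition stationary (L : param -> R) (P : param) : Prop :=
  forall dir : param, exists l : R,
    ((fun a : R => (L (padd P (pscale a dir)) - L P) / a) @ at_right 0 --> l)
    /\ 0 <= l.

Definition local_min (L : param -> R) (P : param) : Prop :=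
  exists e : R, 0 < e /\ forall Q : param, pnorm2 (psub Q P) < e ^+ 2 -> L P <= L Q.

End Net.

From HB Require Import structures.
From mathcomp Require Import all_boot all_order all_algebra.
From mathcomp Require Import all_classical all_reals all_analysis.
From mathcomp Require Import ring lra.
Set Implicit Arguments. Unset Strict Implicit. Unset Printing Implicit Defensive.
Import Order.TTheory GRing.Theory Num.Theory numFieldNormedType.Exports.
Local Open Scope classical_set_scope.
Local Open Scope ring_scope.

(* Write z_ik for the preactivation of hidden neuron i on sample x_k and r_k
   for the residual at P; neuron i is dead when h_i = 0.  Moving only h_i of a
   dead neuron to s c changes the loss by s c sum_k r_k rho(z_ik) + O(s^2), so
   stationarity forces sum_k r_k rho(z_ik) = 0.  If moreover a perturbation v
   of w_i that keeps every z_ik on its side of 0 gives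
   G = sum_k r_k rho(z_ik + v x_k) <> 0, then moving w_i along v and h_i by t
   at the same rate has no first-order term and second-order coefficient
   t G + t^2 M / 2 < 0, with M = sum_k rho(z_ik)^2.
   Otherwise P is a local minimum.  Near P, rescale every live neuron of Q so
   that, by positive homogeneity of rho, its outer weight becomes h_i; on the
   segment from W to the rescaled inner weights no preactivation changes side,
   so the output is affine along it and stationarity makes the first-order
   change of the loss nonnegative, while the dead neurons contribute
   sum_i h^Q_i sum_k r_k rho(w^Q_i x_k) = 0 to first order. *)

Section RealFacts.
Variable R : realFieldType.

Lemma ler_sum_term (T : finType) (F : T -> R) t :
  (forall t, 0 <= F t) -> F t <= \sum_t F t.
Proof.
by move=> F0; rewrite (bigD1 t) //= lerDl; apply: sumr_ge0 => i _; exact: F0.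
Qed.

Lemma finite_nonzero_norm_lbound (T : finType) (f : T -> R) :
  exists2 m, 0 < m & forall t, f t != 0 -> m <= `|f t|.
Proof.
pose S := \sum_t (if f t == 0 then 0 else `|f t|^-1).
have S0 : 0 <= S by apply: sumr_ge0 => t _; case: eqP => // _; rewrite invr_ge0.
exists (1 + S)^-1 => [|t ft0]; first by rewrite invr_gt0; lra.
have ft : 0 < `|f t| by rewrite normr_gt0.
have hS : `|f t|^-1 <= S.
  have := @ler_sum_term T (fun t => if f t == 0 then 0 else `|f t|^-1) t.
  by rewrite (negbTE ft0); apply => i; case: eqP => // _; rewrite invr_ge0.
rewrite -[X in _ <= X]invrK lef_pV2 ?posrE ?invr_gt0 //; lra.
Qed.

Lemma norm_lt_of_sqr_lt (a e : R) : 0 < e -> a ^+ 2 < e ^+ 2 -> `|a| < e.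
Proof.
move=> e0; rewrite -(real_normK (num_real a)).
by rewrite ltr_pXn2r // ?nnegrE ?normr_ge0 ?ltW.
Qed.

(* The minimiser -G/M of t G + t^2 M / 2 is unavailable when M = 0. *)
Lemma quadratic_coef_lt0 (G M : R) : G != 0 -> 0 <= M ->
  (- G / (M + 1)) * G + 2^-1 * (- G / (M + 1)) ^+ 2 * M < 0.
Proof.
move=> G0 M0.
have -> : (- G / (M + 1)) * G + 2^-1 * (- G / (M + 1)) ^+ 2 * M =
    - (G ^+ 2 / (M + 1) ^+ 2) * (2^-1 * M + 1).
  by field; rewrite gt_eqF //; lra.
rewrite mulNr oppr_lt0; apply: mulr_gt0; last lra.
apply: divr_gt0; first by rewrite lt_def sqrf_eq0 G0 sqr_ge0.
by apply: exprn_gt0; lra.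
Qed.

Lemma ge0_of_near1 (c m : R) : 0 < m -> `|c - 1| * m <= m -> 0 <= c.
Proof.
move=> m0 hc; have {}hc : `|c - 1| <= 1 by rewrite -(ler_pM2r m0) mul1r.
have : - `|c - 1| <= c - 1 by rewrite lerNl -normrN ler_norm.
lra.
Qed.

Lemma rescaled_shift_lt (c z u e m Zb X : R) :
  0 < m -> m <= `|z| -> `|z| <= Zb -> e <= m ->
  `|c - 1| * m <= e -> `|u| <= e * X -> e * (Zb / m + 2 * X) < m ->
  `|c * (z + u) - z| < `|z|.
Proof.
move=> m0 mz zZ em cm ue he.
have c1 : `|c - 1| <= 1 by rewrite -(ler_pM2r m0) mul1r; apply: le_trans em.
have c2 : `|c| <= 2.
  by have := ler_normD (c - 1) 1; rewrite subrK normr1; lra.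
have a1 : `|c - 1| * `|z| <= e * (Zb / m).
  apply: le_trans (_ : `|c - 1| * Zb <= _); first by rewrite ler_wpM2l.
  have -> : `|c - 1| * Zb = `|c - 1| * m * (Zb / m) by field; exact: lt0r_neq0.
  have Zb0 : 0 <= Zb := le_trans (normr_ge0 z) zZ.
  by rewrite ler_wpM2r // divr_ge0 // ltW.
have a2 : `|c| * `|u| <= 2 * (e * X) by apply: ler_pM.
have -> : c * (z + u) - z = (c - 1) * z + c * u by ring.
apply: le_lt_trans (ler_normD _ _) _; rewrite !normrM.
lra.
Qed.

End RealFacts.

Section SecondOrder.
Variable R : realType.

Lemma cvg_addr_mul_at_right0 (c l : R) (f : R -> R) :
  f @ 0^'+ --> l -> (fun t => c + t * f t) @ 0^'+ --> c.
Proof.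
move=> fl; rewrite -[X in _ --> X]addr0; apply: cvgD; first exact: cvg_cst.
rewrite -[X in _ --> X](mul0r l); apply: cvgM => //.
exact: (@cvg_at_right_filter R R id 0 0 cvg_id).
Qed.

Lemma second_order_at_right0 (f : R -> R) (C K1 K2 e : R) : C < 0 -> 0 < e ->
  (forall t, 0 < t <= e -> f t = t ^+ 2 * (C + t * (K1 + t * K2))) ->
  (\forall t \near 0^'+, f t < 0) /\ ((fun t => f t / t ^+ 2) @ 0^'+ --> C).
Proof.
move=> C0 e0 hf.
have near_f : \forall t \near 0^'+, f t / t ^+ 2 = C + t * (K1 + t * K2).
  near=> t.
  have t0 : 0 < t by near: t; exact: nbhs_right_gt.
  have te : t <= e by near: t; exact: nbhs_right_le.
  by rewrite hf ?t0 ?te // mulrC mulKf // expf_neq0 // lt0r_neq0.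
have lim_f : (fun t => f t / t ^+ 2) @ 0^'+ --> C.
  have lim_K : (fun t : R => K1 + t * K2) @ 0^'+ --> K1.
    exact: cvg_addr_mul_at_right0 (cvg_cst K2).
  apply: cvg_trans (cvg_addr_mul_at_right0 lim_K).
  by apply: near_eq_cvg; apply: filterS near_f.
split => //; near=> t.
have t0 : 0 < t by near: t; exact: nbhs_right_gt.
have : f t / t ^+ 2 < 0 by near: t; exact: cvgr_lt _ lim_f _ C0.
by rewrite pmulr_llt0 // invr_gt0 exprn_gt0.
Unshelve. all: by end_near.
Qed.

End SecondOrder.

Section Activation.
Variables (R : realType) (ap am : R).
Local Notation rh := (rho ap am).

Lemma rho0 : rh 0 = 0.
Proof. by rewrite /rho lexx mulr0. Qed.

Lemma rhoM_ge0 (c z : R) : 0 <= c -> rh (c * z) = c * rh z.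
Proof.
move=> c0; rewrite /rho; have [->|cpos] := eqVneq c 0.
  by rewrite !mul0r lexx mulr0.
have cp : 0 < c by rewrite lt_def cpos c0.
by rewrite pmulr_rge0 //; case: ifP => _; ring.
Qed.

(* The segment [z, z + u] stays on one side of 0, or starts at 0, where [rho]
   is linear on every ray; in both cases [rho] is affine on it. *)
Definition small_shift (z u : R) := z = 0 \/ `|u| < `|z|.

Lemma small_shift0 (z : R) : small_shift z 0.
Proof.
by have [->|z0] := eqVneq z 0; [left | right; rewrite normr0 normr_gt0].
Qed.

Lemma rho_small_shift (z u t : R) : small_shift z u -> 0 <= t <= 1 ->
  rh (z + t * u) = rh z + t * (rh (z + u) - rh z).
Proof.
move=> [->|hu] /andP[t0 t1].
  by rewrite !add0r rhoM_ge0 // rho0; ring.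
have hu1 := ler_norm u; have hu2 : - `|u| <= u by rewrite lerNl -normrN ler_norm.
have hu0 := normr_ge0 u.
have [zp|zn|z0] := ltrgtP 0 z.
- rewrite (gtr0_norm zp) in hu.
  have h1 : 0 <= z + t * u by nra.
  have h2 : 0 <= z + u by nra.
  by rewrite /rho h1 h2 (ltW zp); ring.
- rewrite (ltr0_norm zn) in hu.
  have h1 : z + t * u < 0 by nra.
  have h2 : z + u < 0 by nra.
  by rewrite /rho !lt_geF //; ring.
- by rewrite -z0 normr0 ltNge normr_ge0 in hu.
Qed.

End Activation.

Section Network.
Variables (R : realType) (nI d nK : nat) (ap am : R).
Variables (xs : 'I_nK -> 'cV[R]_d) (ys : 'I_nK -> R).
Local Notation rh := (rho ap am).
Local Notation L := (loss ap am xs ys).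
Local Notation param := (param R nI d).

Definition descent_direction (P l : param) (C : R) : Prop :=
  pnorm2 l = 1 /\ C < 0 /\
  (\forall delta \near 0^'+, L (padd P (pscale delta l)) - L P < 0) /\
  ((fun delta => (L (padd P (pscale delta l)) - L P) / delta ^+ 2) @ 0^'+ --> C).

Lemma descent_direction_of_expansion (P l : param) (C K1 K2 e : R) :
  pnorm2 l = 1 -> C < 0 -> 0 < e ->
  (forall t, 0 < t <= e ->
     L (padd P (pscale t l)) - L P = t ^+ 2 * (C + t * (K1 + t * K2))) ->
  descent_direction P l C.
Proof.
move=> l1 C0 e0 hL; have [neg lim] := second_order_at_right0 C0 e0 hL.
by split; [|split; [|split]].
Qed.

Lemma yhatE (P : param) (x : 'cV[R]_d) :
  yhat ap am P x = \sum_i P.2 0 i * rh ((P.1 *m x) i 0).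
Proof. by rewrite /yhat !mxE; apply: eq_bigr => i _; rewrite mxE. Qed.

Lemma preact_padd (P D : param) s (x : 'cV[R]_d) i :
  ((padd P (pscale s D)).1 *m x) i 0 = (P.1 *m x) i 0 + s * (D.1 *m x) i 0.
Proof. by rewrite /= mulmxDl -scalemxAl !mxE. Qed.

Lemma weight_padd (P D : param) s i :
  (padd P (pscale s D)).2 0 i = P.2 0 i + s * D.2 0 i.
Proof. by rewrite /= !mxE. Qed.

Lemma lossB (P Q : param) :
  L Q - L P = \sum_k ((yhat ap am P (xs k) - ys k) *
     (yhat ap am Q (xs k) - yhat ap am P (xs k)) +
     2^-1 * (yhat ap am Q (xs k) - yhat ap am P (xs k)) ^+ 2).
Proof. by rewrite /loss -mulrBr -sumrB mulr_sumr; apply: eq_bigr => k _; field. Qed.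

Lemma stationary_first_order_ge0 (P D : param) (A B : R) : stationary L P ->
  (forall s, 0 < s <= 1 -> L (padd P (pscale s D)) - L P = s * A + s ^+ 2 * B) ->
  0 <= A.
Proof.
move=> hst hD; have [l [hl l0]] := hst D.
have hA : (fun s => (L (padd P (pscale s D)) - L P) / s) @ 0^'+ --> A.
  apply: cvg_trans (cvg_addr_mul_at_right0 (cvg_cst B)).
  apply: near_eq_cvg; near=> s.
  have s0 : 0 < s by near: s; exact: nbhs_right_gt.
  have s1 : s <= 1 by near: s; apply: nbhs_right_le; exact: ltr01.
  by rewrite hD ?s0 ?s1 //; field; exact: lt0r_neq0.
by rewrite (cvg_unique _ hA hl).
Unshelve. all: by end_near.
Qed.

Lemma pnorm2_sub_lt (P Q : param) e : 0 < e -> pnorm2 (psub Q P) < e ^+ 2 ->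
  (forall i j, `|Q.1 i j - P.1 i j| < e) /\ (forall i, `|Q.2 0 i - P.2 0 i| < e).
Proof.
move=> e0; rewrite /pnorm2 => hQ.
have W0 : 0 <= \sum_i \sum_j (psub Q P).1 i j ^+ 2.
  by apply: sumr_ge0 => i _; apply: sumr_ge0 => j _; exact: sqr_ge0.
have H0 : 0 <= \sum_i (psub Q P).2 0 i ^+ 2.
  by apply: sumr_ge0 => i _; exact: sqr_ge0.
split => [i j|i]; apply: norm_lt_of_sqr_lt => //.
  have -> : Q.1 i j - P.1 i j = (psub Q P).1 i j by rewrite !mxE.
  have h1 := ler_sum_term j (fun j => sqr_ge0 ((psub Q P).1 i j)).
  have h2 := ler_sum_term (F := fun i => \sum_j (psub Q P).1 i j ^+ 2) i
    (fun i => sumr_ge0 _ (fun j _ => sqr_ge0 _)).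
  lra.
have -> : Q.2 0 i - P.2 0 i = (psub Q P).2 0 i by rewrite !mxE.
have h1 := ler_sum_term i (fun i => sqr_ge0 ((psub Q P).2 0 i)).
lra.
Qed.

Lemma preact_sub_le (P Q : param) e (x : 'cV[R]_d) i :
  (forall i j, `|Q.1 i j - P.1 i j| < e) ->
  `|((Q.1 - P.1) *m x) i 0| <= e * \sum_j `|x j 0|.
Proof.
move=> hW; rewrite mxE mulr_sumr; apply: le_trans (ler_norm_sum _ _ _) _.
apply: ler_sum => j _; rewrite normrM ler_wpM2r // !mxE.
exact: ltW.
Qed.

Definition neuron_dir (i0 : 'I_nI) (V : 'M[R]_(nI, d)) (lam tt : R) : param :=
  (\matrix_(i, j) (if i == i0 then lam * V i j else 0),
   \row_i (if i == i0 then tt else 0)).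

Lemma neuron_dir_preact i0 V lam tt (x : 'cV[R]_d) i :
  ((neuron_dir i0 V lam tt).1 *m x) i 0 = if i == i0 then lam * (V *m x) i0 0 else 0.
Proof.
rewrite !mxE; have [->|ne] := eqVneq i i0.
  by rewrite mulr_sumr; apply: eq_bigr => j _; rewrite !mxE eqxx mulrA.
by rewrite big1 // => j _; rewrite !mxE (negbTE ne) mul0r.
Qed.

Lemma neuron_dir_weight i0 V lam tt i :
  (neuron_dir i0 V lam tt).2 0 i = if i == i0 then tt else 0.
Proof. by rewrite mxE. Qed.

Lemma pnorm2_neuron_dir i0 V lam tt :
  pnorm2 (neuron_dir i0 V lam tt) = lam ^+ 2 * \sum_j V i0 j ^+ 2 + tt ^+ 2.
Proof.
have W0 i : i != i0 -> \sum_j (neuron_dir i0 V lam tt).1 i j ^+ 2 = 0.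
  by move=> ne; apply: big1 => j _; rewrite mxE (negbTE ne) expr0n.
have H0 i : i != i0 -> (neuron_dir i0 V lam tt).2 0 i ^+ 2 = 0.
  by move=> ne; rewrite mxE (negbTE ne) expr0n.
rewrite /pnorm2 (bigD1 i0) //= (eq_bigr _ W0) big1_eq addr0.
rewrite [X in _ + X](bigD1 i0) //= (eq_bigr _ H0) big1_eq addr0.
rewrite mulr_sumr mxE eqxx; congr (_ + _).
by apply: eq_bigr => j _; rewrite mxE eqxx exprMn.
Qed.

Section AtPoint.
Variable P : param.
Local Notation z i k := ((P.1 *m xs k) i 0).
Local Notation res k := (yhat ap am P (xs k) - ys k).
Local Notation gain i0 V k := (rh (z i0 k + (V *m xs k) i0 0) - rh (z i0 k)).

Lemma yhat_neuron_dirB i0 V lam tt s (x : 'cV[R]_d) :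
  yhat ap am (padd P (pscale s (neuron_dir i0 V lam tt))) x - yhat ap am P x =
  (P.2 0 i0 + s * tt) * rh ((P.1 *m x) i0 0 + s * lam * (V *m x) i0 0)
  - P.2 0 i0 * rh ((P.1 *m x) i0 0).
Proof.
rewrite !yhatE -sumrB.
under eq_bigr do rewrite preact_padd weight_padd neuron_dir_preact neuron_dir_weight.
rewrite (bigD1 i0) //= big1 ?addr0 => [|i ne]; first by rewrite eqxx mulrA.
by rewrite (negbTE ne) !mulr0 !addr0 subrr.
Qed.

Lemma loss_neuron_dir i0 V lam tt s :
  P.2 0 i0 = 0 -> (forall k, small_shift (z i0 k) ((V *m xs k) i0 0)) ->
  0 <= s * lam <= 1 ->
  L (padd P (pscale s (neuron_dir i0 V lam tt))) - L P =
  s * (tt * \sum_k res k * rh (z i0 k)) +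
  s ^+ 2 * (tt * lam * (\sum_k res k * gain i0 V k)
             + 2^-1 * tt ^+ 2 * \sum_k rh (z i0 k) ^+ 2
             + s * (tt ^+ 2 * lam * (\sum_k rh (z i0 k) * gain i0 V k)
                    + s * (2^-1 * tt ^+ 2 * lam ^+ 2 * \sum_k gain i0 V k ^+ 2))).
Proof.
move=> hH hV hs; rewrite lossB.
have hB k : yhat ap am (padd P (pscale s (neuron_dir i0 V lam tt))) (xs k)
    - yhat ap am P (xs k) = s * tt * (rh (z i0 k) + s * lam * gain i0 V k).
  by rewrite yhat_neuron_dirB hH rho_small_shift //; ring.
under eq_bigr => k _ do rewrite hB.
rewrite !mulrDr !mulr_sumr -!big_split /=.
by apply: eq_bigr => k _; field.
Qed.

Lemma stationary_dead_neuron i0 : stationary L P -> P.2 0 i0 = 0 ->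
  \sum_k res k * rh (z i0 k) = 0.
Proof.
move=> hst hH.
have first_order c : 0 <= c * \sum_k res k * rh (z i0 k).
  pose B := 2^-1 * c ^+ 2 * \sum_k rh (z i0 k) ^+ 2.
  apply: (stationary_first_order_ge0 (D := neuron_dir i0 0 0 c) (B := B)) hst _ => s _.
  rewrite loss_neuron_dir // => [|k|]; first by rewrite /B; ring.
    by rewrite mul0mx [X in small_shift _ X]mxE; exact: small_shift0.
  by rewrite mulr0 lexx ler01.
by have := first_order 1; have := first_order (-1); lra.
Qed.

Definition escape i0 (V : 'M[R]_(nI, d)) : Prop :=
  [/\ P.2 0 i0 = 0, forall k, small_shift (z i0 k) ((V *m xs k) i0 0) &
      \sum_k res k * rh (z i0 k + (V *m xs k) i0 0) != 0].

Lemma escape_descent i0 V : stationary L P -> escape i0 V ->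
  exists l C, descent_direction P l C.
Proof.
move=> hst [hH hV]; set G := \sum_k _ => G0.
have S0 := stationary_dead_neuron hst hH.
have Ga : \sum_k res k * gain i0 V k = G.
  by under eq_bigr => k _ do rewrite mulrBr; rewrite sumrB S0 subr0.
pose M := \sum_k rh (z i0 k) ^+ 2.
have M0 : 0 <= M by apply: sumr_ge0 => k _; exact: sqr_ge0.
pose t := - G / (M + 1).
have t0 : t != 0 by rewrite mulf_neq0 ?oppr_eq0 ?invr_eq0 // gt_eqF //; lra.
pose N := \sum_j V i0 j ^+ 2 + t ^+ 2.
have N0 : 0 < N.
  rewrite ltr_wpDl ?sumr_ge0 // => [j _|]; first exact: sqr_ge0.
  by rewrite lt_def sqrf_eq0 t0 sqr_ge0.
pose lam := (Num.sqrt N)^-1.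
have lam0 : 0 < lam by rewrite invr_gt0 sqrtr_gt0.
have lamN : lam ^+ 2 * N = 1.
  by rewrite exprVn sqr_sqrtr ?ltW // mulVf // gt_eqF.
exists (neuron_dir i0 V lam (lam * t)), (lam * t * lam * G + 2^-1 * (lam * t) ^+ 2 * M).
apply: (descent_direction_of_expansion (e := lam^-1)) => [|||s /andP[s0 s1]].
- by rewrite pnorm2_neuron_dir exprMn -mulrDr.
- have -> : lam * t * lam * G + 2^-1 * (lam * t) ^+ 2 * M =
      lam ^+ 2 * (t * G + 2^-1 * t ^+ 2 * M) by ring.
  by rewrite pmulr_rlt0 ?exprn_gt0 // quadratic_coef_lt0.
- by rewrite invr_gt0.
have slam : 0 <= s * lam <= 1.
  rewrite mulr_ge0 ?(ltW s0) ?(ltW lam0) //=.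
  by rewrite -(mulVf (lt0r_neq0 lam0)) ler_pM2r.
(* The cubic and quartic coefficients of the expansion determine [K1] and [K2]. *)
by rewrite loss_neuron_dir // S0 Ga !mulr0 add0r.
Qed.

Definition rescale (Q : param) i := if P.2 0 i == 0 then 1 else Q.2 0 i / P.2 0 i.

Definition rescaled_dir (Q : param) : param :=
  (\matrix_(i, j) (rescale Q i * Q.1 i j - P.1 i j), 0).

Definition rescalable (Q : param) : Prop :=
  (forall i, 0 <= rescale Q i) /\
  (forall i k, small_shift (z i k) (rescale Q i * (Q.1 *m xs k) i 0 - z i k)).

Definition live_change (Q : param) k :=
  \sum_i P.2 0 i * (rh (rescale Q i * (Q.1 *m xs k) i 0) - rh (z i k)).

Definition dead_output (Q : param) k :=
  \sum_i if P.2 0 i == 0 then Q.2 0 i * rh ((Q.1 *m xs k) i 0) else 0.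

Lemma rescaled_dir_preact Q (x : 'cV[R]_d) i :
  ((rescaled_dir Q).1 *m x) i 0 = rescale Q i * (Q.1 *m x) i 0 - (P.1 *m x) i 0.
Proof.
by rewrite !mxE mulr_sumr -sumrB; apply: eq_bigr => j _; rewrite !mxE; ring.
Qed.

Lemma loss_rescaled_dir Q s : rescalable Q -> 0 < s <= 1 ->
  L (padd P (pscale s (rescaled_dir Q))) - L P =
  s * (\sum_k res k * live_change Q k) + s ^+ 2 * \sum_k 2^-1 * live_change Q k ^+ 2.
Proof.
move=> [_ hshift] /andP[s0 s1].
have hB k : yhat ap am (padd P (pscale s (rescaled_dir Q))) (xs k) - yhat ap am P (xs k)
    = s * live_change Q k.
  rewrite !yhatE -sumrB /live_change mulr_sumr; apply: eq_bigr => i _.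
  rewrite preact_padd weight_padd rescaled_dir_preact mxE mulr0 addr0.
  by rewrite rho_small_shift ?(ltW s0) ?s1 // [z i k + _]addrC subrK; ring.
rewrite lossB; under eq_bigr => k _ do rewrite hB.
by rewrite !mulr_sumr -big_split /=; apply: eq_bigr => k _; ring.
Qed.

Lemma yhat_rescaleB Q k : (forall i, 0 <= rescale Q i) ->
  yhat ap am Q (xs k) - yhat ap am P (xs k) = live_change Q k + dead_output Q k.
Proof.
move=> hc; rewrite !yhatE -sumrB -big_split; apply: eq_bigr => i _ /=.
have := hc i; rewrite /rescale; case: eqP => [->|/eqP hH] ci.
  by rewrite mul1r !mul0r; ring.
by rewrite rhoM_ge0 //; field.
Qed.

Lemma dead_output_orthogonal Q : (forall i0 V, ~ escape i0 V) -> rescalable Q ->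
  \sum_k res k * dead_output Q k = 0.
Proof.
move=> no_escape [_ hshift].
under eq_bigr => k _ do rewrite /dead_output mulr_sumr.
rewrite exchange_big /=; apply: big1 => i _; case: eqP => hH; last first.
  by apply: big1 => k _; rewrite mulr0.
have hQ k : (Q.1 *m xs k) i 0 = z i k + ((Q.1 - P.1) *m xs k) i 0.
  by rewrite mulmxBl [X in _ + X]mxE [X in _ + (_ + X)]mxE addrC subrK.
under eq_bigr => k _ do rewrite mulrCA hQ.
rewrite -mulr_sumr; apply/eqP; rewrite mulf_eq0; apply/orP; right.
apply/negPn/negP => G0; apply: (no_escape i (Q.1 - P.1)); split => // k.
by have := hshift i k; rewrite /rescale hH eqxx mul1r hQ addrC addKr.
Qed.

Lemma rescalable_loss_ge Q : stationary L P -> (forall i0 V, ~ escape i0 V) ->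
  rescalable Q -> L P <= L Q.
Proof.
move=> hst no_escape hQ.
have live_ge0 : 0 <= \sum_k res k * live_change Q k.
  by apply: (stationary_first_order_ge0 hst) => s; exact: loss_rescaled_dir.
rewrite -subr_ge0 lossB.
have [hc _] := hQ.
under eq_bigr => k _ do rewrite yhat_rescaleB // mulrDr.
rewrite !big_split /= (dead_output_orthogonal no_escape hQ) addr0.
apply: addr_ge0 => //; apply: sumr_ge0 => k _.
by apply: mulr_ge0; [rewrite invr_ge0 | exact: sqr_ge0].
Qed.

Lemma rescale_near1 (Q : param) i (m e : R) : 0 <= e ->
  (P.2 0 i != 0 -> m <= `|P.2 0 i|) -> `|Q.2 0 i - P.2 0 i| < e ->
  `|rescale Q i - 1| * m <= e.
Proof.
rewrite /rescale => e0 hm hQ; case: eqP => [_|/eqP hH].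
  by rewrite subrr normr0 mul0r.
have -> : Q.2 0 i / P.2 0 i - 1 = (Q.2 0 i - P.2 0 i) / P.2 0 i by field.
have hP : 0 < `|P.2 0 i| by rewrite normr_gt0.
rewrite normrM normfV.
apply: le_trans (_ : `|Q.2 0 i - P.2 0 i| / `|P.2 0 i| * `|P.2 0 i| <= e).
  by rewrite ler_wpM2l ?divr_ge0 // hm.
by rewrite divfK ?lt0r_neq0 // ltW.
Qed.

Lemma rescalable_near : exists2 e, 0 < e &
  forall Q : param, pnorm2 (psub Q P) < e ^+ 2 -> rescalable Q.
Proof.
have [mH mH0 hmH] := finite_nonzero_norm_lbound (fun i => P.2 0 i).
have [mZ mZ0 hmZ] := finite_nonzero_norm_lbound (fun ik : 'I_nI * 'I_nK => z ik.1 ik.2).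
pose m := Num.min mH mZ.
have m0 : 0 < m by rewrite lt_min mH0 mZ0.
pose Zb := \sum_(ik : 'I_nI * 'I_nK) `|z ik.1 ik.2|.
have hZb i k : `|z i k| <= Zb.
  exact: (ler_sum_term (F := fun ik : 'I_nI * 'I_nK => `|z ik.1 ik.2|) (i, k)).
pose X := \sum_k \sum_j `|xs k j 0|.
have hX k : \sum_j `|xs k j 0| <= X.
  exact: (ler_sum_term (F := fun k => \sum_j `|xs k j 0|) k
    (fun k => sumr_ge0 _ (fun j _ => normr_ge0 _))).
have X0 : 0 <= X by apply: sumr_ge0 => k _; apply: sumr_ge0.
have Zb0 : 0 <= Zb by apply: sumr_ge0.
pose K := Zb / m + 2 * X + 1.
have Zbm : 0 <= Zb / m by rewrite divr_ge0 // ltW.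
have K1 : 1 <= K by rewrite /K; lra.
have K0 : 0 < K by lra.
have e0 : 0 < m / K by rewrite divr_gt0.
have em : m / K <= m by rewrite ler_pdivrMr // ler_peMr // ltW.
exists (m / K) => // Q hQ.
have [hW hH] := pnorm2_sub_lt e0 hQ.
have hc i : `|rescale Q i - 1| * m <= m / K.
  apply: rescale_near1 (ltW e0) _ (hH i) => hi.
  by apply: le_trans (hmH i hi); rewrite ge_min lexx.
split => [i|i k].
  exact: (ge0_of_near1 m0 (le_trans (hc i) em)).
have [->|zk] := eqVneq (z i k) 0; [by left | right].
have hQz : (Q.1 *m xs k) i 0 = z i k + ((Q.1 - P.1) *m xs k) i 0.
  by rewrite mulmxBl [X in _ + X]mxE [X in _ + (_ + X)]mxE addrC subrK.
rewrite hQz; apply: (rescaled_shift_lt (e := m / K) (m := m) (Zb := Zb) (X := X)) => //.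
- by apply: le_trans (hmZ (i, k) zk); rewrite ge_min lexx orbT.
- apply: le_trans (_ : _ <= m / K * \sum_j `|xs k j 0|) _; first exact: preact_sub_le.
  by rewrite ler_wpM2l ?(ltW e0).
- have -> : Zb / m + 2 * X = K - 1 by rewrite /K; ring.
  by rewrite mulrBr mulr1 divfK ?gt_eqF //; lra.
Qed.

Lemma no_escape_local_min : stationary L P -> (forall i0 V, ~ escape i0 V) ->
  local_min L P.
Proof.
move=> hst no_escape; have [e e0 he] := rescalable_near.
by exists e; split => // Q hQ; apply: rescalable_loss_ge => //; exact: he.
Qed.

End AtPoint.

Lemma stationary_descent (P : param) : stationary L P -> ~ local_min L P ->
  exists l C, descent_direction P l C.
Proof.
move=> hst not_min; case: (pselect (exists i0 V, escape P i0 V)) => [[i0 [V hV]]|].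
  exact: escape_descent hst hV.
move=> no_escape; case: not_min; apply: no_escape_local_min => // i0 V hV.
by apply: no_escape; exists i0, V.
Qed.

End Network.

Theorem corollary1 (R : realType) (nI nK d : nat) (hd : (1 < d)%N)
  (ap am : R) (hapm : ap != am)
  (xs : 'I_nK -> 'cV[R]_d) (ys : 'I_nK -> R) (Pb : param R nI d) :
  stationary (loss ap am xs ys) Pb ->
  ~ local_min (loss ap am xs ys) Pb ->
  exists (l : param R nI d) (C : R),
    pnorm2 l = 1 /\ C < 0 /\
    (\forall delta \near at_right 0,
        loss ap am xs ys (padd Pb (pscale delta l)) - loss ap am xs ys Pb < 0) /\
    ((fun delta : R =>
        (loss ap am xs ys (padd Pb (pscale delta l)) - loss ap am xs ys Pb)
          / delta ^+ 2) @ at_right 0 --> C).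
Proof.
move=> hst not_min.
have [l [C descent]] := stationary_descent hst not_min.
by exists l, C; exact: descent.
Qed.
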